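(* Let $G=(V,E)$ be a finite directed acyclic graph, $G'=(V,E')$ its minimum equivalent graph, and $f:V\to S$ a stream assignment satisfying maximum logical concurrency on $G'$. Then $\mathrm{min}_{sync}(G',f)=|E'|-|Q(f)|$.
   Context: A path from $u$ to $v$ in a directed graph is a nonempty sequence of edges $(u,w_1),\dots,(w_k,v)$ of that graph. The minimum equivalent graph (MEG) of a finite DAG $G=(V,E)$ is the subgraph $G'=(V,E')$, $E'\subseteq E$, with the same vertex set and the smallest number of edges among subgraphs having the same reachability relation as $G$. A stream assignment is a function $f:V\to S$ into a set of streams $S$; it satisfies maximum logical concurrency on $G'$ if for all distinct $u,v\in V$ with no path between them in either direction in $G'$, $f(u)\neq f(v)$. A synchronization plan $\Lambda\subseteq E'$ is safe for $f$ on $G'$ if for every edge $(u,v)\in E'$, either $f(u)=f(v)$ or there is a path $P\subseteq E'$ from $u$ to $v$ with $P\cap\Lambda\neq\emptyset$; $\mathrm{min}_{sync}(G',f)=\min\{|\Lambda| : \Lambda\subseteq E' \text{ safe for } f \text{ on } G'\}$. Define $Q(f)=\{v\in V : \exists p\in V \text{ with } (p,v)\in E' \text{ and } f(p)=f(v)\}$. *)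

From mathcomp Require Import all_boot.
From Stdlib Require Import ClassicalEpsilon.
Set Implicit Arguments. Unset Strict Implicit. Unset Printing Implicit Defensive.

Section Graphs.
Variable V : finType.

Definition edge_rel (E : {set V * V}) : rel V := fun x y => (x, y) \in E.

Definition walk_edges (u : V) (p : seq V) : seq (V * V) := zip (u :: p) p.

(* A path from u to v in E: a NONEMPTY sequence of edges of E
   (u,w1),(w1,w2),...,(wk,v), encoded by the vertex list p = [w1;..;wk;v]. *)
Definition is_path (E : {set V * V}) (u v : V) (p : seq V) : Prop :=
  [/\ p != [::], path (edge_rel E) u p & last u p = v].

Definition reach (E : {set V * V}) (u v : V) : Prop :=
  exists p, is_path E u v p.

Definition acyclic (E : {set V * V}) : Prop := forall u, ~ reach E u u.

Definition same_reach (E1 E2 : {set V * V}) : Prop :=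
  forall u v, reach E1 u v <-> reach E2 u v.

Definition is_MEG (E E' : {set V * V}) : Prop :=
  [/\ E' \subset E, same_reach E E' &
      forall E'' : {set V * V}, E'' \subset E -> same_reach E E'' ->
        #|E'| <= #|E''| ].

Variable S : eqType.

Definition max_logical_concurrency (E' : {set V * V}) (f : V -> S) : Prop :=
  forall u v, u != v -> ~ reach E' u v -> ~ reach E' v u -> f u != f v.

Definition safe_plan (E' : {set V * V}) (f : V -> S) (L : {set V * V}) : Prop :=
  L \subset E' /\
  forall u v, (u, v) \in E' ->
    f u = f v \/
    exists p, is_path E' u v p /\ has (fun e => e \in L) (walk_edges u p).

Definition safe_planb (E' : {set V * V}) (f : V -> S) (L : {set V * V}) : bool :=
  if excluded_middle_informative (safe_plan E' f L) then true else false.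

(* min_sync(E', f) = min { |L| : L safe for f on E' }.  Every safe plan is a
   subset of E', and E' itself is safe, so #|E'| is a harmless neutral
   element for the minimum. *)
Definition min_sync (E' : {set V * V}) (f : V -> S) : nat :=
  \big[minn/#|E'|]_(L : {set V * V} | safe_planb E' f L) #|L|.

Definition Qset (E' : {set V * V}) (f : V -> S) : {set V} :=
  [set v | [exists p, ((p, v) \in E') && (f p == f v)]].

End Graphs.

From HB Require Import structures.
From mathcomp Require Import all_boot.
From Stdlib Require Import ClassicalEpsilon.
Set Implicit Arguments. Unset Strict Implicit. Unset Printing Implicit Defensive.

(* 1. Paths and reachability: concatenation, monotonicity in the edge set, and
      the fact that reachability only depends on which edges are reachable.
   2. A minimum equivalent graph E' is irredundant: no edge (u,v) of E' can be
      replaced by another u-v path of E' (otherwise E' minus (u,v) would be a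
      smaller equivalent subgraph).  If moreover E is acyclic, so is E', and
      any u-v path of E' through the edge (u,v) is that edge alone.  Hence the
      ONLY path of E' joining the endpoints of an edge is the edge itself.
   3. In such a graph a plan L is safe iff it contains all cross-stream edges
      D = {(u,v) in E' | f u <> f v}; so min_sync = |D|.
   4. Under maximum logical concurrency two same-stream edges cannot enter the
      same vertex, so the target map is a bijection from the same-stream edges
      C onto Q(f).  As E' is the disjoint union of C and D, |D| = |E'| - |Q(f)|. *)

Section BigMin.

(* minn is associative and commutative, which lets a term be pulled out of a
   \big[minn/m] (big_rem_AC) even though minn has no neutral element. *)
HB.instance Definition _ := SemiGroup.isComLaw.Build nat minn minnA minnC.

Lemma bigmin_attained (I : finType) (P : pred I) (F : I -> nat) m x0 :
  P x0 -> F x0 <= m -> (forall x, P x -> F x0 <= F x) ->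
  \big[minn/m]_(x | P x) F x = F x0.
Proof.
move=> Px0 le_m le_F; apply/eqP; rewrite eqn_leq; apply/andP; split.
- by rewrite (big_rem_AC _ _ _ _ (mem_index_enum x0)) Px0 geq_minl.
- by apply: (big_ind (fun n => F x0 <= n)) => // a b ha hb; rewrite leq_min ha hb.
Qed.

End BigMin.

Section Paths.
Variable V : finType.
Implicit Types (E : {set V * V}) (u v w : V) (p q : seq V).

Lemma is_path_cat E u v w p q :
  is_path E u v p -> is_path E v w q -> is_path E u w (p ++ q).
Proof.
case=> p0 pp pl [q0 qp ql]; split.
- by case: p p0 {pp pl}.
- by rewrite cat_path pp pl.
- by rewrite last_cat pl.
Qed.

Lemma reach_edge E u v : (u, v) \in E -> reach E u v.
Proof. by move=> uv; exists [:: v]; split; rewrite //= /edge_rel uv. Qed.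

Lemma reach_trans E u v w : reach E u v -> reach E v w -> reach E u w.
Proof. by case=> p hp [q hq]; exists (p ++ q); apply: is_path_cat hp hq. Qed.

Lemma reach_mono E1 E2 u v : E1 \subset E2 -> reach E1 u v -> reach E2 u v.
Proof.
move=> sub [p [p0 pp pl]]; exists p; split=> //.
by apply: sub_path pp => x y; apply: (subsetP sub).
Qed.

Lemma reach_of_edges E1 E2 u v :
  (forall a b, (a, b) \in E1 -> reach E2 a b) -> reach E1 u v -> reach E2 u v.
Proof.
move=> bridge [p [p0 pp <-]] {v}.
elim: p u p0 pp => [//|a q IH] u _ /= /andP[ua aq].
case: q IH aq => [|b q] IH aq; first exact: bridge.
exact: reach_trans (bridge _ _ ua) (IH a isT aq).
Qed.

Lemma acyclic_same_reach E1 E2 : acyclic E1 -> same_reach E1 E2 -> acyclic E2.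
Proof. by move=> ac sr u /sr; apply: ac. Qed.

Lemma walk_edges_split u p a b : (a, b) \in walk_edges u p ->
  exists p1 p2, p = p1 ++ b :: p2 /\ last u p1 = a.
Proof.
elim: p u => [//|c q IH] u; rewrite /walk_edges /= inE.
case/orP=> [/eqP[-> ->]|/IH[q1 [q2 [-> lq1]]]]; first by exists [::], q.
by exists (c :: q1), q2.
Qed.

Lemma acyclic_path_through_edge E u v p : acyclic E ->
  is_path E u v p -> (u, v) \in walk_edges u p -> p = [:: v].
Proof.
move=> ac [_ pp pl] /walk_edges_split[p1 [p2 [def_p lp1]]].
move: pp pl; rewrite def_p cat_path last_cat /= => /andP[pp1 /andP[_ pp2]] lp2.
case: p1 def_p lp1 pp1 => [_ lp1 _ | w p1 _ lp1 pp1].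
  case: p2 lp2 pp2 => [//|w p2] lp2 pp2.
  by case: (ac v); exists (w :: p2).
by case: (ac u); exists (w :: p1).
Qed.

Lemma path_avoiding E e u p : path (edge_rel E) u p ->
  e \notin walk_edges u p -> path (edge_rel (E :\ e)) u p.
Proof.
elim: p u => [//|c q IH] u /= /andP[uc cq]; rewrite /walk_edges /= inE negb_or.
case/andP=> ne nq; rewrite IH // andbT.
by rewrite /edge_rel in_setD1 eq_sym ne; exact: uc.
Qed.

(* Edge-irredundancy: the only path of E joining the ends of an edge of E is
   that edge itself.  This is the transitive-reduction property of the MEG. *)
Definition edge_irredundant E : Prop :=
  forall u v p, (u, v) \in E -> is_path E u v p -> p = [:: v].

Lemma irredundant_no_reach E a b v : edge_irredundant E ->
  (a, v) \in E -> (b, v) \in E -> ~ reach E a b.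
Proof.
move=> irr av bv [q hq].
have hqv : is_path E a v (q ++ [:: v]).
  by apply: is_path_cat hq _; split; rewrite //= /edge_rel bv.
case: hq => q0 _ _; move/(congr1 size): (irr _ _ _ av hqv).
by rewrite size_cat /= addn1; case: q q0 {hqv}.
Qed.

(* A minimum equivalent graph has no edge whose endpoints are still joined
   after removing it: otherwise E' minus that edge would be smaller. *)
Lemma MEG_edge_essential E E' u v : is_MEG E E' -> (u, v) \in E' ->
  ~ reach (E' :\ (u, v)) u v.
Proof.
case=> sub sr minE' uv r.
have sub' : E' :\ (u, v) \subset E by apply: subset_trans (subD1set _ _) sub.
suff /minE' : same_reach E (E' :\ (u, v)).
  by rewrite (cardsD1 (u, v) E') uv add1n ltnn => /(_ sub').
move=> x y; split=> [/sr|]; last exact: reach_mono.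
apply: reach_of_edges => a c ac.
case: (eqVneq (a, c) (u, v)) => [[-> ->] //|ne].
by apply: reach_edge; rewrite in_setD1 ne ac.
Qed.

(* The MEG of an acyclic graph is edge-irredundant: a u-v path either uses
   the edge (u,v), and is then that edge by acyclicity, or avoids it, which
   edge-essentiality forbids. *)
Lemma MEG_edge_irredundant E E' : acyclic E -> is_MEG E E' ->
  edge_irredundant E'.
Proof.
move=> ac meg u v p uv hp.
have ac' : acyclic E' by apply: acyclic_same_reach ac _; case: meg.
case: (boolP ((u, v) \in walk_edges u p)) => [through|avoid].
  exact: acyclic_path_through_edge hp through.
case: (MEG_edge_essential meg uv); exists p.
by case: hp => p0 pp pl; split=> //; apply: path_avoiding.
Qed.

End Paths.

Section Synchronization.
Variables (V : finType) (S : eqType) (E' : {set V * V}) (f : V -> S).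

Definition cross_edges : {set V * V} := [set e in E' | f e.1 != f e.2].
Definition same_edges : {set V * V} := [set e in E' | f e.1 == f e.2].

Lemma card_edges_split : #|E'| = #|same_edges| + #|cross_edges|.
Proof.
rewrite -(cardsID same_edges E'); congr (_ + _); apply: eq_card => e;
  by rewrite !inE; case: (e \in E'); rewrite ?andbF ?andbT.
Qed.

Lemma cross_edges_sub : cross_edges \subset E'.
Proof. by apply/subsetP => e; rewrite inE => /andP[]. Qed.

Hypothesis irr : edge_irredundant E'.

(* Since an edge is the only path between its ends, it is synchronized only
   if it lies in the plan itself: safe plans are the supersets of D. *)
Lemma safe_planE L : safe_plan E' f L <-> (L \subset E') && (cross_edges \subset L).
Proof.
split=> [[sL safe] | /andP[sL sD]].
- rewrite sL /=; apply/subsetP => -[u v]; rewrite inE /= => /andP[uv neq].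
  case: (safe u v uv) => [eq|[p [hp hasL]]]; first by rewrite eq eqxx in neq.
  by move: hasL; rewrite (irr uv hp) /= orbF.
- split=> // u v uv; case: (eqVneq (f u) (f v)) => [eq|neq]; [by left | right].
  exists [:: v]; split; first by split; rewrite //= /edge_rel uv.
  by rewrite /= orbF; apply: (subsetP sD); rewrite inE uv.
Qed.

Lemma min_sync_cross : min_sync E' f = #|cross_edges|.
Proof.
have safeE L : safe_planb E' f L = (L \subset E') && (cross_edges \subset L).
  rewrite /safe_planb; case: excluded_middle_informative => [/safe_planE -> //|].
  by move=> unsafe; apply/esym/negP => /safe_planE.
apply: bigmin_attained; rewrite ?safeE ?cross_edges_sub ?subxx //.
  exact: subset_leq_card cross_edges_sub.
by move=> L; rewrite safeE => /andP[_]; apply: subset_leq_card.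
Qed.

Hypothesis mlc : max_logical_concurrency E' f.

(* Q(f) is the set of targets of same-stream edges, and the target map is
   injective on them: two distinct same-stream sources of v would be
   incomparable, hence on different streams. *)
Lemma card_same_edges : #|same_edges| = #|Qset E' f|.
Proof.
have -> : Qset E' f = [set e.2 | e in same_edges].
  apply/setP => v; rewrite inE; apply/existsP/imsetP.
  - by case=> p pv; exists (p, v); rewrite // inE.
  - by case=> -[p w]; rewrite inE /= => pw ->; exists p.
rewrite card_in_imset // => -[p1 v] [p2 v2]; rewrite !inE /=.
move=> /andP[e1 /eqP f1] /andP[e2 /eqP f2] /= ev; subst v2.
case: (eqVneq p1 p2) => [-> //|ne]; exfalso.
have /negP := mlc ne (irredundant_no_reach irr e1 e2) (irredundant_no_reach irr e2 e1).
by rewrite f1 f2 eqxx.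
Qed.

End Synchronization.

Theorem lemma4 (V : finType) (S : eqType) (E E' : {set V * V}) (f : V -> S) :
  acyclic E -> is_MEG E E' -> max_logical_concurrency E' f ->
  min_sync E' f = #|E'| - #|Qset E' f|.
Proof.
move=> acE meg mlc.
have irr : edge_irredundant E' := MEG_edge_irredundant acE meg.
rewrite (min_sync_cross f irr) (card_edges_split E' f).
by rewrite (card_same_edges irr mlc) addKn.
Qed.
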